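(* Let $m,n\ge 3$ with $m\neq n$. Let $\circ$ be any one of the four boolean operations union ($\cup$), intersection ($\cap$), difference ($\setminus$) and symmetric difference ($\oplus$). Then the state complexity of $U_m(a,b,\emptyset)\circ U_n(a,b,\emptyset)$ is exactly $mn$.
   Context: The state complexity of a regular language is the number of states of its minimal complete deterministic finite automaton (DFA). For $n\ge 3$, $\mathcal{U}_n(a,b,\emptyset)$ is the DFA over alphabet $\{a,b\}$ with state set $\{0,\dots,n-1\}$, initial state $0$, set of final states $\{n-1\}$, where input $a$ maps $i\mapsto i+1 \pmod n$ (a cycle of all states) and input $b$ swaps states $0$ and $1$ and fixes all other states. $U_n(a,b,\emptyset)$ is the language accepted by $\mathcal{U}_n(a,b,\emptyset)$. For languages $K,L$: $K\setminus L$ is set difference and $K\oplus L=(K\setminus L)\cup(L\setminus K)$. *)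

From mathcomp Require Import all_boot.
Set Implicit Arguments. Unset Strict Implicit. Unset Printing Implicit Defensive.

Inductive sym := a | b.

Definition word := seq sym.
Definition language := word -> bool.

(* A complete DFA over {a,b} with k states, the states being 'I_k
   (every finite complete DFA is isomorphic to one of this form). *)
Record dfa (k : nat) := DFA {
  init  : 'I_k;
  delta : 'I_k -> sym -> 'I_k;
  final : pred 'I_k
}.

Definition accepts k (D : dfa k) (w : word) : bool :=
  final D (foldl (delta D) (init D) w).

Definition recognizes k (D : dfa k) (L : language) : Prop :=
  forall w, accepts D w = L w.

Definition state_complexity (L : language) (k : nat) : Prop :=
  (exists D : dfa k, recognizes D L) /\
  (forall k' (D : dfa k'), recognizes D L -> k <= k').

(* The DFA U_n(a,b,emptyset): states 0..n-1, initial 0, final {n-1},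
   a : i |-> i+1 mod n, b : swaps 0 and 1, fixes the rest. *)
Definition u_step (n : nat) (i : nat) (c : sym) : nat :=
  match c with
  | a => i.+1 %% n
  | b => if i == 0 then 1 else if i == 1 then 0 else i
  end.

Definition U (n : nat) : language :=
  fun w => foldl (u_step n) 0 w == n.-1.

Inductive boolop := Union | Inter | Diff | SymDiff.

Definition bop (o : boolop) (x y : bool) : bool :=
  match o with
  | Union => x || y
  | Inter => x && y
  | Diff => x && ~~ y
  | SymDiff => x (+) y
  end.

Definition lang_op (o : boolop) (K L : language) : language :=
  fun w => bop o (K w) (L w).

From mathcomp Require Import all_boot zify.

(* Upper bound: the product automaton on pairs of states, accepting when the
   boolean operation applied to the two acceptance bits is true, recognizes the
   language; it has m*n states.

   Lower bound (fooling-set argument, [dfa_lower_bound]): every one of the m*n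
   pairs of states is reachable from (0,0), and any two distinct pairs are
   distinguished by some suffix, so any DFA needs m*n states.
   - Reachability: a^t adds t to both components (mod m and mod n), while (ab)^t
     fixes 0 and rotates 1..k-1 cyclically.  For m < n this moves (0,y) to any
     (0,y'), hence any pair to any other ([reach_all]; here m ≠ n is used).
   - Distinguishability: letters act as permutations, so a word leading p to a
     target t leads q to a pair that agrees with t exactly where q agrees with p.
     A suitable target settles every case except symmetric difference with both
     components different; there the rotations (ab)^t, of the distinct periods
     m-1 and n-1, separate the two acceptance bits ([ab_separate]). *)

Definition run (k i : nat) (w : word) : nat := foldl (u_step k) i w.

Lemma run_cat k i w1 w2 : run k i (w1 ++ w2) = run k (run k i w1) w2.
Proof. by rewrite /run foldl_cat. Qed.

Lemma u_step_lt k i c : 2 <= k -> i < k -> u_step k i c < k.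
Proof.
move=> hk hi; case: c => /=; first by rewrite ltn_pmod //; lia.
by case: ifP => _; [|case: ifP => _]; lia.
Qed.

Lemma run_lt k i w : 2 <= k -> i < k -> run k i w < k.
Proof. by move=> hk; elim: w i => [|c w IH] i hi //=; apply/IH/u_step_lt. Qed.

Lemma u_step_inj k i j c : i < k -> j < k -> u_step k i c = u_step k j c -> i = j.
Proof.
move=> hi hj; case: c => /=.
  by move=> /eqP; rewrite -(addn1 i) -(addn1 j) eqn_modDr !modn_small // => /eqP.
by repeat (case: eqP => ? /=); lia.
Qed.

Lemma run_eq k i j w : 2 <= k -> i < k -> j < k -> (run k i w == run k j w) = (i == j).
Proof.
move=> hk; elim: w i j => [|c w IH] i j hi hj //=.
rewrite IH ?u_step_lt //; apply/eqP/eqP => [|-> //]; exact: u_step_inj.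
Qed.

Definition rep (t : nat) (w : word) : word := flatten (nseq t w).

Local Notation ab := [:: a; b].

Lemma rep_add t1 t2 w : rep (t1 + t2) w = rep t1 w ++ rep t2 w.
Proof. by rewrite /rep nseqD flatten_cat. Qed.

Lemma run_rep k i t w : run k i (rep t w) = iter t (fun j => run k j w) i.
Proof. by elim: t i => [|t IH] i //=; rewrite run_cat IH -iterSr. Qed.

Lemma run_a_pow k i t : i < k -> run k i (rep t [:: a]) = (i + t) %% k.
Proof.
move=> hi; rewrite run_rep; elim: t => [|t IH]; first by rewrite addn0 modn_small.
by rewrite iterS IH /run /= -(addn1 (_ %% _)) modnDml addn1 addnS.
Qed.

(* ab acts as the cycle (1 2 ... k-1) and fixes 0. *)
Lemma run_ab k x : 0 < x < k -> run k x ab = (x %% k.-1).+1.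
Proof.
move=> /andP[x0 xk]; rewrite /run /=.
have [xk1|xk1] := eqVneq x.+1 k; first by rewrite -xk1 modnn /= modnn.
rewrite !modn_small; try lia.
by case: x x0 {xk xk1}.
Qed.

Lemma run_ab_pow0 k t : 2 <= k -> run k 0 (rep t ab) = 0.
Proof.
by move=> hk; rewrite run_rep; elim: t => [|t /= ->] //; rewrite /run /= modn_small.
Qed.

Lemma run_ab_pow k x t : 0 < x < k -> run k x (rep t ab) = ((x.-1 + t) %% k.-1).+1.
Proof.
move=> hx; have hk : 0 < k.-1 by lia.
rewrite run_rep; elim: t => [|t IH]; first by rewrite /= addn0 modn_small; lia.
rewrite iterS IH run_ab; last by have := ltn_pmod (x.-1 + t) hk; lia.
by rewrite -(addn1 ((x.-1 + t) %% _)) modnDml addn1 addnS.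
Qed.

Lemma run_ab_reach k x y : 0 < x < k -> 0 < y < k ->
  run k x (rep (y + k.-1 - x) ab) = y.
Proof.
move=> hx hy; rewrite run_ab_pow // (_ : _ + _ = y.-1 + k.-1); last lia.
by rewrite modnDr modn_small; lia.
Qed.

Lemma run_ab_period k x : 0 < x < k -> run k x (rep k.-1 ab) = x.
Proof. by move=> hx; rewrite run_ab_pow // modnDr modn_small; lia. Qed.

(* Since the ab-cycles on the nonzero states of U_m and U_n have different
   lengths, some power of ab makes exactly one of the two states final:
   bring x to m-1, and if y is then n-1, rotate by m-1 more (for m < n). *)
Lemma ab_separate m n x y : m != n -> 0 < x < m -> 0 < y < n ->
  exists t, (run m x (rep t ab) == m.-1) != (run n y (rep t ab) == n.-1).
Proof.
wlog lt_mn : m n x y / m < n.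
  move=> hwlog ne hx hy; case: (ltngtP m n) => [lt|gt|eq]; first exact: hwlog.
    by have [t ht] := hwlog n m y x gt (negbT (ltn_eqF gt)) hy hx; exists t; rewrite eq_sym.
  by rewrite eq eqxx in ne.
move=> _ hx hy.
have hm1 : 0 < m.-1 < m by lia.
have x_final := @run_ab_reach m x m.-1 hx hm1.
case: (eqVneq (run n y (rep (m.-1 + m.-1 - x) ab)) n.-1) => y_final; last first.
  by exists (m.-1 + m.-1 - x); rewrite x_final eqxx y_final.
exists (m.-1 + m.-1 - x + m.-1); rewrite !rep_add !run_cat x_final y_final.
rewrite run_ab_period // run_ab_pow; last lia.
rewrite (_ : _ + _ = m.-2 + n.-1); last lia.
by rewrite modnDr modn_small; [apply/eqP; lia | lia].
Qed.

Definition prun (m n : nat) (p : nat * nat) (w : word) : nat * nat :=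
  (run m p.1 w, run n p.2 w).

Lemma prun_cat m n p w1 w2 : prun m n p (w1 ++ w2) = prun m n (prun m n p w1) w2.
Proof. by rewrite /prun !run_cat. Qed.

Definition reach (m n : nat) (p q : nat * nat) : Prop := exists w, prun m n p w = q.

Lemma reach_trans {m n : nat} {p r q : nat * nat} :
  reach m n p r -> reach m n r q -> reach m n p q.
Proof. by move=> [w1 e1] [w2 e2]; exists (w1 ++ w2); rewrite prun_cat e1. Qed.

Lemma reach_swap m n p1 p2 q1 q2 :
  reach m n (p1, p2) (q1, q2) -> reach n m (p2, p1) (q2, q1).
Proof. by move=> [w [e1 e2]]; exists w; rewrite /prun /= e1 e2. Qed.

Lemma reach_a_pow m n i j t : i < m -> j < n ->
  reach m n (i, j) ((i + t) %% m, (j + t) %% n).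
Proof. by move=> hi hj; exists (rep t [:: a]); rewrite /prun /= !run_a_pow. Qed.

Lemma reach_ab_pow m n y y' : 2 <= m -> 0 < y < n -> 0 < y' < n ->
  reach m n (0, y) (0, y').
Proof.
move=> hm hy hy'; exists (rep (y' + n.-1 - y) ab).
by rewrite /prun /= run_ab_pow0 ?run_ab_reach.
Qed.

(* For m < n the column {0} x {0..n-1} is strongly connected: a^m leaves the
   first component at 0 and moves the second by m, in particular between 0 and
   the nonzero states m and n-m; (ab)^t connects the nonzero ones. *)
Lemma reach_col0 m n y y' : 2 <= m -> m < n -> y < n -> y' < n ->
  reach m n (0, y) (0, y').
Proof.
move=> hm hmn hy hy'.
have leave0 : reach m n (0, 0) (0, m).
  by have := @reach_a_pow m n 0 0 m; rewrite add0n modnn modn_small //; apply; lia.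
have enter0 : reach m n (0, n - m) (0, 0).
  by have := @reach_a_pow m n 0 (n - m) m; rewrite add0n subnK ?modnn //; [apply | ]; lia.
case: (posnP y) => [->|y0]; case: (posnP y') => [->|y0'].
- by exists [::].
- by apply: (reach_trans leave0); apply: reach_ab_pow; lia.
- by apply: (reach_trans _ enter0); apply: reach_ab_pow; lia.
- by apply: reach_ab_pow; lia.
Qed.

(* For m < n: move to the column 0 with a^(m-p1), adjust the second component
   inside that column, and leave it with a^q1. *)
Lemma reach_lt m n p1 p2 q1 q2 : 2 <= m -> m < n ->
  p1 < m -> p2 < n -> q1 < m -> q2 < n -> reach m n (p1, p2) (q1, q2).
Proof.
move=> hm hmn hp1 hp2 hq1 hq2.
have := @reach_a_pow m n p1 p2 (m - p1) hp1 hp2.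
rewrite subnKC ?modnn; last lia.
move/reach_trans; apply.
have y_lt : (q2 + (n - q1)) %% n < n by rewrite ltn_pmod; lia.
apply: (reach_trans (@reach_col0 m n _ _ hm hmn _ y_lt)); first by rewrite ltn_pmod; lia.
have := @reach_a_pow m n 0 _ q1 _ y_lt.
rewrite add0n (modn_small hq1) modnDml (_ : _ + q1 = q2 + n); last lia.
by rewrite modnDr (modn_small hq2); apply; lia.
Qed.

Lemma reach_all m n p1 p2 q1 q2 : 2 <= m -> 2 <= n -> m != n ->
  p1 < m -> p2 < n -> q1 < m -> q2 < n -> reach m n (p1, p2) (q1, q2).
Proof.
move=> hm hn hmn hp1 hp2 hq1 hq2; case: (ltngtP m n) => [lt|gt|eq].
- exact: reach_lt.
- exact/reach_swap/reach_lt.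
- by rewrite eq eqxx in hmn.
Qed.

Definition acc (o : boolop) (m n : nat) (p : nat * nat) : bool :=
  bop o (p.1 == m.-1) (p.2 == n.-1).

Definition distinguishable (o : boolop) (m n : nat) (p q : nat * nat) : Prop :=
  exists s, acc o m n (prun m n p s) != acc o m n (prun m n q s).

Lemma distinguishable_after o m n p q w :
  distinguishable o m n (prun m n p w) (prun m n q w) -> distinguishable o m n p q.
Proof. by move=> [s hs]; exists (w ++ s); rewrite !prun_cat. Qed.

Lemma bop_sensitive_fst o : exists v, bop o true v != bop o false v.
Proof. by case: o; [exists false | exists true | exists false | exists true]. Qed.

Lemma bop_sensitive_snd o : exists u, bop o u true != bop o u false.
Proof. by case: o; [exists false | exists true | exists true | exists true]. Qed.

Section Distinguish.

Variables (m n : nat).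
Hypotheses (hm : 2 <= m) (hn : 2 <= n) (hmn : m != n).

(* To distinguish p from q it suffices to distinguish a target t from every
   pair that agrees with t exactly in the components where q agrees with p:
   the word leading p to t leads q to such a pair, by [run_eq]. *)
Lemma distinguish_via_target o p1 p2 q1 q2 t1 t2 :
  p1 < m -> p2 < n -> q1 < m -> q2 < n -> t1 < m -> t2 < n ->
  (forall x y, x < m -> y < n -> (x == t1) = (q1 == p1) -> (y == t2) = (q2 == p2) ->
     distinguishable o m n (t1, t2) (x, y)) ->
  distinguishable o m n (p1, p2) (q1, q2).
Proof.
move=> hp1 hp2 hq1 hq2 ht1 ht2 dist_t.
have [w hw] := @reach_all m n p1 p2 t1 t2 hm hn hmn hp1 hp2 ht1 ht2.
apply: (@distinguishable_after o m n _ _ w); rewrite hw /prun /=.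
case: hw => e1 e2; apply: dist_t; rewrite -?e1 -?e2 ?run_lt ?run_eq //.
Qed.

(* Only the first components differ: target (m-1, c), with c chosen by
   [bop_sensitive_fst]. *)
Lemma distinguish_fst o p1 p2 q1 q2 : p1 < m -> p2 < n -> q1 < m -> q2 < n ->
  p1 != q1 -> p2 = q2 -> distinguishable o m n (p1, p2) (q1, q2).
Proof.
move=> hp1 hp2 hq1 hq2 ne1 e2; have [v hv] := bop_sensitive_fst o.
apply: (@distinguish_via_target _ _ _ _ _ m.-1 (if v then n.-1 else 0)) => //.
- by rewrite ltn_predL; lia.
- by case: v {hv}; lia.
move=> x y _ _; rewrite [q1 == p1]eq_sym (negbTE ne1) e2 eqxx => /negbT x_ne /eqP ->.
exists [::]; rewrite /acc /= eqxx (negbTE x_ne).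
by case: v hv; rewrite ?eqxx // (_ : (0 == n.-1) = false) //; apply/eqP; lia.
Qed.

Lemma distinguish_snd o p1 p2 q1 q2 : p1 < m -> p2 < n -> q1 < m -> q2 < n ->
  p1 = q1 -> p2 != q2 -> distinguishable o m n (p1, p2) (q1, q2).
Proof.
move=> hp1 hp2 hq1 hq2 e1 ne2; have [u hu] := bop_sensitive_snd o.
apply: (@distinguish_via_target _ _ _ _ _ (if u then m.-1 else 0) n.-1) => //.
- by case: u {hu}; lia.
- by rewrite ltn_predL; lia.
move=> x y _ _; rewrite e1 eqxx [q2 == p2]eq_sym (negbTE ne2) => /eqP -> /negbT y_ne.
exists [::]; rewrite /acc /= eqxx (negbTE y_ne).
by case: u hu; rewrite ?eqxx // (_ : (0 == m.-1) = false) //; apply/eqP; lia.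
Qed.

(* Both components differ: for union and intersection use the target
   (m-1, n-1), for difference (m-1, 0).  For symmetric difference no single
   target works; use (0, 0), which every power of ab fixes, and separate the
   acceptance bits of the other pair by [ab_separate]. *)
Lemma distinguish_both o p1 p2 q1 q2 : p1 < m -> p2 < n -> q1 < m -> q2 < n ->
  p1 != q1 -> p2 != q2 -> distinguishable o m n (p1, p2) (q1, q2).
Proof.
move=> hp1 hp2 hq1 hq2 ne1 ne2.
have last_m : m.-1 < m by rewrite ltn_predL; lia.
have last_n : n.-1 < n by rewrite ltn_predL; lia.
have zero_m : 0 < m by lia.
have zero_n : 0 < n by lia.
have zero_last_m : (0 == m.-1) = false by apply/eqP; lia.
have zero_last_n : (0 == n.-1) = false by apply/eqP; lia.
have differ (x y t1 t2 : nat) :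
    (x == t1) = (q1 == p1) -> (y == t2) = (q2 == p2) -> x != t1 /\ y != t2.
  rewrite [q1 == p1]eq_sym [q2 == p2]eq_sym (negbTE ne1) (negbTE ne2).
  by move=> /negbT nx /negbT ny.
case: o.
- apply: (@distinguish_via_target _ _ _ _ _ m.-1 n.-1) => // x y _ _ ex ey.
  have [nx ny] := differ _ _ _ _ ex ey.
  by exists [::]; rewrite /acc /= !eqxx (negbTE nx) (negbTE ny).
- apply: (@distinguish_via_target _ _ _ _ _ m.-1 n.-1) => // x y _ _ ex ey.
  have [nx ny] := differ _ _ _ _ ex ey.
  by exists [::]; rewrite /acc /= !eqxx (negbTE nx).
- apply: (@distinguish_via_target _ _ _ _ _ m.-1 0) => // x y _ _ ex ey.
  have [nx ny] := differ _ _ _ _ ex ey.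
  by exists [::]; rewrite /acc /= !eqxx (negbTE nx) zero_last_n.
apply: (@distinguish_via_target _ _ _ _ _ 0 0) => // x y hx hy ex ey.
have [nx ny] := differ _ _ _ _ ex ey.
have x_rot : 0 < x < m by lia.
have y_rot : 0 < y < n by lia.
have [t ht] := @ab_separate m n x y hmn x_rot y_rot.
exists (rep t ab); rewrite /acc /prun /= !run_ab_pow0 // zero_last_m zero_last_n.
by move: ht; case: (run m x _ == _); case: (run n y _ == _).
Qed.

Lemma distinguish_pairs o p1 p2 q1 q2 : p1 < m -> p2 < n -> q1 < m -> q2 < n ->
  (p1, p2) != (q1, q2) -> distinguishable o m n (p1, p2) (q1, q2).
Proof.
move=> hp1 hp2 hq1 hq2 ne.
case: (eqVneq p1 q1) => [e1|ne1]; case: (eqVneq p2 q2) => [e2|ne2].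
- by rewrite e1 e2 eqxx in ne.
- exact: distinguish_snd.
- exact: distinguish_fst.
- exact: distinguish_both.
Qed.

End Distinguish.

Lemma dfa_of_finType (T : finType) (s0 : T) (d : T -> sym -> T) (f : pred T)
    (L : language) :
  (forall w, f (foldl d s0 w) = L w) -> exists D : dfa #|T|, recognizes D L.
Proof.
move=> hL; pose d' (i : 'I_#|T|) c := enum_rank (d (enum_val i) c).
have foldl_d' w s : enum_val (foldl d' (enum_rank s) w) = foldl d s w.
  by elim: w s => [|c w IH] s /=; rewrite ?IH enum_rankK.
exists (DFA (enum_rank s0) d' (fun i => f (enum_val i))).
by move=> w; rewrite /accepts /= foldl_d' hL.
Qed.

(* Fooling-set lower bound: if every p : T is reached by some word and words
   reaching distinct elements have distinguishing suffixes, then any DFA for L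
   has at least #|T| states (distinct elements lead to distinct DFA states). *)
Lemma dfa_lower_bound (L : language) (T : finType) (reaches : T -> word -> Prop) :
  (forall p, exists w, reaches p w) ->
  (forall p q wp wq, p != q -> reaches p wp -> reaches q wq ->
     exists s, L (wp ++ s) != L (wq ++ s)) ->
  forall k (D : dfa k), recognizes D L -> #|T| <= k.
Proof.
move=> reachable separated k D hD.
pose state w := foldl (delta D) (init D) w.
have : forall p, exists st, exists w, reaches p w /\ state w = st.
  by move=> p; have [w hw] := reachable p; exists (state w), w.
move=> /fin_all_exists [f hf].
rewrite -(card_ord k); apply: (leq_card f) => p q fpq; apply/eqP; apply: contraT => ne.
have [wp [hp sp]] := hf p; have [wq [hq sq]] := hf q.
have [s] := separated p q wp wq ne hp hq.
by rewrite -!hD /accepts !foldl_cat -/(state wp) -/(state wq) sp sq fpq eqxx.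
Qed.

Definition u_step_ord (k : nat) (i : 'I_k) (c : sym) : 'I_k := insubd i (u_step k i c).

Lemma run_ord k (i : 'I_k) w : 2 <= k -> val (foldl (@u_step_ord k) i w) = run k i w.
Proof. by move=> hk; elim: w i => [|c w IH] i //=; rewrite IH val_insubd u_step_lt. Qed.

Lemma lang_op_U o m n w : lang_op o (U m) (U n) w = acc o m n (prun m n (0, 0) w).
Proof. by []. Qed.

Lemma U_op_dfa o m n : 2 <= m -> 2 <= n ->
  exists D : dfa (m * n), recognizes D (lang_op o (U m) (U n)).
Proof.
move=> hm hn; have m0 : 0 < m by lia.
have n0 : 0 < n by lia.
pose d (p : 'I_m * 'I_n) (c : sym) := (u_step_ord m p.1 c, u_step_ord n p.2 c).
have foldl_d w p :
    foldl d p w = (foldl (@u_step_ord m) p.1 w, foldl (@u_step_ord n) p.2 w).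
  by elim: w p => [|c w IH] [i j] //=; rewrite IH.
rewrite -[m in m * n]card_ord -[n in _ * n]card_ord -card_prod.
apply: (@dfa_of_finType _ (Ordinal m0, Ordinal n0) d
          (fun p => acc o m n (val p.1, val p.2))).
by move=> w; rewrite foldl_d /= !run_ord.
Qed.

Theorem theorem1 (m n : nat) (o : boolop) :
  3 <= m -> 3 <= n -> m != n ->
  state_complexity (lang_op o (U m) (U n)) (m * n).
Proof.
move=> hm hn hmn; have hm2 : 2 <= m by lia.
have hn2 : 2 <= n by lia.
split; first exact: U_op_dfa.
move=> k D hD; rewrite -[m in m * n]card_ord -[n in _ * n]card_ord -card_prod.
apply: (@dfa_lower_bound _ _ (fun p w => prun m n (0, 0) w = (val p.1, val p.2)) _ _ k D hD).
  by move=> [i j]; apply: (@reach_all m n); rewrite ?ltn_ord //; lia.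
move=> [i j] [i' j'] wp wq ne /= hp hq.
have ne_val : (val i, val j) != (val i', val j').
  by apply: contra ne => /eqP [/val_inj -> /val_inj ->].
have [s hs] := @distinguish_pairs m n hm2 hn2 hmn o _ _ _ _ (ltn_ord i) (ltn_ord j)
                                  (ltn_ord i') (ltn_ord j') ne_val.
by exists s; rewrite !lang_op_U !prun_cat hp hq.
Qed.
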